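(* Let $G_N=(V,E)$ be a connected, undirected, edge-weighted graph on $N$ nodes and let $v\in V$ be the initial mutant node. Then one of the following holds: (1) $\rho^{\mathrm{Bd}}_{r=1}(G_N,v)<\rho^{\mathrm{Bd}}_{r=1}(K_N)$; (2) $\rho^{\mathrm{dB}}_{r=1}(G_N,v)<\rho^{\mathrm{dB}}_{r=1}(K_N)$; (3) $\rho^{\mathrm{Bd}}_{r=1}(G_N,v)=\rho^{\mathrm{Bd}}_{r=1}(K_N)$ and $\rho^{\mathrm{dB}}_{r=1}(G_N,v)=\rho^{\mathrm{dB}}_{r=1}(K_N)$.
   Context: Each edge $\{u,v\}$ has a positive weight $w(u,v)$ and $\deg(u)=\sum_{v} w(u,v)$. Each node is occupied by a resident (fitness 1) or a mutant (fitness $r\ge 1$); $f(u)$ is the fitness at $u$ and $F=\sum_u f(u)$. Moran Birth-death (Bd) process: each step a node $u$ is chosen with probability $f(u)/F$ and its offspring replaces a neighbor $v$ chosen with probability $w(u,v)/\deg(u)$. Moran death-Birth (dB) process: each step a uniformly random node $v$ dies and is replaced by the offspring of a neighbor $u$ chosen with probability $f(u)w(u,v)/\sum_{u'}f(u')w(u',v)$. $\rho^{\mathrm{Bd}}_r(G_N,v)$ (resp. $\rho^{\mathrm{dB}}_r(G_N,v)$) is the probability that mutants eventually occupy all nodes when initially only $v$ is a mutant. $K_N$ is the unweighted complete graph on $N$ nodes, and $\rho_r(K_N)$ denotes the fixation probability of a single mutant on $K_N$ (independent of the starting node). *)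

From HB Require Import structures.
From mathcomp Require Import all_boot all_order all_algebra.
From mathcomp Require Import all_classical all_reals all_analysis.
Set Implicit Arguments. Unset Strict Implicit. Unset Printing Implicit Defensive.
Import Order.TTheory GRing.Theory Num.Theory numFieldNormedType.Exports.
Local Open Scope ring_scope.

Section Moran.
Variables (R : realType) (T : finType).

(* A (connected, undirected, edge-weighted) graph is given by a weight
   function w : T -> T -> R; w u v > 0 iff {u,v} is an edge. *)
Definition weighted_graph (w : T -> T -> R) : Prop :=
  [/\ (forall u v, w u v = w v u), (forall u v, 0 <= w u v) & (forall u, w u u = 0)].

Definition adj (w : T -> T -> R) : rel T := fun u v => 0 < w u v.

Definition graph_connected (w : T -> T -> R) : Prop :=
  forall u v, connect (adj w) u v.

Definition complete_w : T -> T -> R := fun u v => if u == v then 0 else 1.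

Definition deg (w : T -> T -> R) (u : T) : R := \sum_(x : T) w u x.

(* States: the set S of mutant nodes. *)
Definition fitness (r : R) (S : {set T}) (u : T) : R := if u \in S then r else 1.
Definition total_fitness (r : R) (S : {set T}) : R := \sum_(u : T) fitness r S u.

(* After node u reproduces onto node x. *)
Definition update (S : {set T}) (u x : T) : {set T} :=
  if u \in S then x |: S else S :\ x.

Definition trans_Bd (w : T -> T -> R) (r : R) (S S' : {set T}) : R :=
  \sum_(u : T) \sum_(x : T)
    (fitness r S u / total_fitness r S) * (w u x / deg w u)
    * (update S u x == S')%:R.

Definition trans_dB (w : T -> T -> R) (r : R) (S S' : {set T}) : R :=
  \sum_(x : T) (#|T|%:R)^-1 * \sum_(u : T)
    (fitness r S u * w u x / \sum_(u' : T) fitness r S u' * w u' x)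
    * (update S u x == S')%:R.

(* Since [set: T]
   is absorbing, this is the probability of fixation within n steps. *)
Fixpoint prob_full (P : {set T} -> {set T} -> R) (n : nat) (S : {set T}) : R :=
  match n with
  | O => (S == [set: T])%:R
  | m.+1 => \sum_(S' : {set T}) P S S' * prob_full P m S'
  end.

Definition rho_Bd (w : T -> T -> R) (r : R) (v : T) : R :=
  limn (fun n => prob_full (trans_Bd w r) n [set v]).

Definition rho_dB (w : T -> T -> R) (r : R) (v : T) : R :=
  limn (fun n => prob_full (trans_dB w r) n [set v]).

End Moran.

From HB Require Import structures.
From mathcomp Require Import all_boot all_order all_algebra.
From mathcomp Require Import all_classical all_reals all_analysis.
From mathcomp Require Import ring.
Import Order.TTheory GRing.Theory Num.Theory numFieldNormedType.Exports.
Local Open Scope ring_scope.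
Set Implicit Arguments. Unset Strict Implicit.

(* At neutral fitness both processes move from the mutant set S to
   [update S u x] with a weight [q u x] satisfying detailed balance
   [q u x * c x = q x u * c u], where [c = 1/deg] for Bd and [c = deg] for dB.
   Hence the [c]-mass of S divided by the total mass is harmonic for the chain,
   and so is the fixation probability.  Both are 0 on the empty set and 1 on the
   full set, and connectivity lets every other state move outwards, so by the
   maximum principle they coincide: a single mutant at v fixes with probability
   [(1/deg v) / sum (1/deg)] under Bd and [deg v / sum deg] under dB.  On K_N both
   equal 1/N.  If neither is below 1/N, multiplying the two inequalities gives
   [(sum deg) (sum 1/deg) <= N^2], and the equality case of Cauchy-Schwarz
   forces a regular graph, on which both equal 1/N. *)

Section NeutralChain.
Variables (R : realType) (T : finType).

Definition update_kernel (q : T -> T -> R) (S S' : {set T}) : R :=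
  \sum_u \sum_x q u x * (update S u x == S')%:R.

Lemma sum_update_kernel q S (g : {set T} -> R) :
  \sum_S' update_kernel q S S' * g S' = \sum_u \sum_x q u x * g (update S u x).
Proof.
under eq_bigr do rewrite big_distrl /=; rewrite exchange_big; apply: eq_bigr => u _.
under eq_bigr do rewrite big_distrl /=; rewrite exchange_big; apply: eq_bigr => x _.
under eq_bigr do rewrite -mulrA mulr_natl mulrb eq_sym.
by rewrite -big_distrr -big_mkcond big_pred1_eq.
Qed.

Lemma update_setT u x : update [set: T] u x = [set: T].
Proof. by rewrite /update finset.in_setT finset.setUT. Qed.

Lemma update_set0 u x : update finset.set0 u x = finset.set0 :> {set T}.
Proof. by rewrite /update finset.in_set0 finset.set0D. Qed.

Lemma update_in (S : {set T}) u x : u \in S -> update S u x = x |: S.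
Proof. by rewrite /update => ->. Qed.

Lemma double_sum_sym_diff (K : T -> T -> R) (g : T -> R) :
  (forall u x, K u x = K x u) -> \sum_u \sum_x K u x * (g u - g x) = 0.
Proof.
move=> K_sym.
under eq_bigr do under eq_bigr do rewrite mulrBr.
under eq_bigr do rewrite sumrB.
rewrite sumrB [X in _ - X]exchange_big /=.
by under [X in _ - X]eq_bigr do under eq_bigr do rewrite K_sym; rewrite subrr.
Qed.

Section Kernel.
Variable q : T -> T -> R.
Hypothesis q_ge0 : forall u x, 0 <= q u x.
Hypothesis q_sum1 : \sum_u \sum_x q u x = 1.

Definition harmonic (D : {set T} -> R) : Prop :=
  forall S, D S = \sum_u \sum_x q u x * D (update S u x).

Lemma kernel_mean_const (a : R) : \sum_u \sum_x q u x * a = a.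
Proof.
rewrite -[RHS]mul1r -q_sum1 big_distrl; apply: eq_bigr => u _.
by rewrite big_distrl.
Qed.

Lemma harmonicB D1 D2 :
  harmonic D1 -> harmonic D2 -> harmonic (fun S => D1 S - D2 S).
Proof.
move=> h1 h2 S; rewrite {1}h1 {1}h2 -sumrB; apply: eq_bigr => u _.
by rewrite -sumrB; apply: eq_bigr => x _; rewrite mulrBr.
Qed.

Local Notation pf := (prob_full (update_kernel q)).

Lemma prob_fullS n S : pf n.+1 S = \sum_u \sum_x q u x * pf n (update S u x).
Proof. exact: sum_update_kernel. Qed.

Lemma prob_full_absorbing n S :
  (forall u x, update S u x = S) -> pf n S = (S == [set: T])%:R.
Proof.
move=> S_abs; elim: n => [//|n IH]; rewrite prob_fullS.
by under eq_bigr do under eq_bigr do rewrite S_abs IH; exact: kernel_mean_const.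
Qed.

Lemma prob_full_ge0_le1 n S : 0 <= pf n S <= 1.
Proof.
elim: n S => [|n IH] S; first by rewrite /=; case: (S == _); rewrite ?ler01 ?lexx.
rewrite prob_fullS; apply/andP; split.
  apply: sumr_ge0 => u _; apply: sumr_ge0 => x _.
  by rewrite mulr_ge0 //; case/andP: (IH (update S u x)).
rewrite -[X in _ <= X](kernel_mean_const 1); apply: ler_sum => u _.
apply: ler_sum => x _.
by rewrite ler_wpM2l //; case/andP: (IH (update S u x)).
Qed.

Lemma prob_full_nondecreasing S : nondecreasing_seq (fun n => pf n S).
Proof.
apply/nondecreasing_seqP => n; elim: n S => [|n IH] S.
  rewrite prob_fullS /=; case: eqP => [->|_].
    rewrite -[X in X <= _](kernel_mean_const 1).
    by under eq_bigr do under eq_bigr do rewrite update_setT eqxx.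
  by apply: sumr_ge0 => u _; apply: sumr_ge0 => x _; rewrite mulr_ge0.
rewrite (prob_fullS n.+1) prob_fullS; apply: ler_sum => u _; apply: ler_sum => x _.
by rewrite ler_wpM2l.
Qed.

Definition fixation S := limn (fun n => pf n S).

Lemma prob_full_cvg S : (pf n S @[n --> \oo] --> fixation S)%classic.
Proof.
apply: nondecreasing_is_cvgn; first exact: prob_full_nondecreasing.
by exists 1 => _ [n _ <-]; case/andP: (prob_full_ge0_le1 n S).
Qed.

Lemma fixation_absorbing S :
  (forall u x, update S u x = S) -> fixation S = (S == [set: T])%:R.
Proof.
move=> S_abs; rewrite /fixation.
under eq_fun do rewrite prob_full_absorbing //.
exact: lim_cst.
Qed.

Lemma fixation_harmonic : harmonic fixation.
Proof.
move=> S; apply: cvg_lim => //; rewrite -(cvg_shiftS (fun n => pf n S)) /=.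
under eq_fun do rewrite sum_update_kernel.
apply: cvg_big => [|u _]; first exact: add_continuous.
apply: cvg_big => [|x _]; first exact: add_continuous.
by apply: cvgM; [exact: cvg_cst | exact: prob_full_cvg].
Qed.

Lemma harmonic_max_update D m S u x :
  harmonic D -> (forall S', D S' <= m) -> D S = m -> 0 < q u x ->
  D (update S u x) = m.
Proof.
move=> D_harm D_le DS q_pos.
have gap_ge0 u' x' : 0 <= q u' x' * (m - D (update S u' x')).
  by rewrite mulr_ge0 // subr_ge0.
have gap_sum0 : \sum_u' \sum_x' q u' x' * (m - D (update S u' x')) = 0.
  under eq_bigr do under eq_bigr do rewrite mulrBr.
  under eq_bigr do rewrite sumrB.
  by rewrite sumrB kernel_mean_const -D_harm DS subrr.
have /eqP : q u x * (m - D (update S u x)) = 0.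
  have row0 : \sum_x' q u x' * (m - D (update S u x')) = 0.
    by apply: (psumr_eq0P _ gap_sum0) => // u' _; exact: sumr_ge0.
  exact: (psumr_eq0P _ row0).
by rewrite mulf_eq0 gt_eqF //= subr_eq0 => /eqP.
Qed.

Definition outward_connected : Prop :=
  forall S : {set T}, S != finset.set0 -> S != [set: T] ->
    exists u x, [/\ u \in S, x \notin S & 0 < q u x].

(* The maximum of a harmonic function spreads outward from a maximising state
   until it reaches one of the two boundary states. *)
Lemma harmonic_le0 D : outward_connected -> harmonic D ->
  D [set: T] = 0 -> D finset.set0 = 0 -> forall S, D S <= 0.
Proof.
move=> q_out D_harm DT D0.
have [S0 _ D_le] := @arg_maxP _ _ _ (@finset.set0 T) predT D isT.
suff: forall k S, (#|~: S| < k)%N -> D S = D S0 -> D S0 = 0.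
  by move=> max0 S; rewrite -(max0 _ S0 (ltnSn _) erefl); exact: D_le.
elim=> [|k IH] S; first by rewrite ltn0.
move=> S_k DS; have [/eqP ST | S_nT] := boolP (S == [set: T]); first by rewrite -DS ST.
have [/eqP S0' | S_n0] := boolP (S == finset.set0); first by rewrite -DS S0'.
have [u [x [uS xS q_pos]]] := q_out S S_n0 S_nT.
apply: (IH (x |: S)); last first.
  by rewrite -(update_in x uS); apply: harmonic_max_update => // S'; apply: D_le.
rewrite ltnS in S_k; apply: leq_trans (proper_card _) S_k.
by rewrite properC properUr // finset.sub1set.
Qed.

Variable c : T -> R.
Hypothesis c_gt0 : forall x, 0 < c x.
Hypothesis q_balance : forall u x, q u x * c x = q x u * c u.

Definition share (S : {set T}) : R := (\sum_(y in S) c y) / \sum_y c y.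

Lemma sum_update S u x : \sum_(y in update S u x) c y
  = \sum_(y in S) c y + ((u \in S)%:R - (x \in S)%:R) * c x.
Proof.
rewrite /update; case: (boolP (u \in S)) => uS; case: (boolP (x \in S)) => xS.
- have -> : x |: S = S by apply/finset.setUidPr; rewrite finset.sub1set.
  by rewrite subrr mul0r addr0.
- by rewrite big_setU1 //= subr0 mul1r addrC.
- by rewrite [in RHS](big_setD1 x) //= sub0r mulN1r addrAC subrr add0r.
- have -> : S :\ x = S.
    by apply/setP => y; rewrite in_setD1; case: eqP => // ->; rewrite (negbTE xS).
  by rewrite subrr mul0r addr0.
Qed.

Lemma share_harmonic : harmonic share.
Proof.
move=> S; rewrite /share; set Z := \sum_y c y.
under [RHS]eq_bigr do under eq_bigr do rewrite sum_update mulrDl mulrDr.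
under [RHS]eq_bigr do rewrite big_split /=.
rewrite big_split /= kernel_mean_const -[LHS]addr0; congr (_ + _).
have -> : \sum_u \sum_x q u x * (((u \in S)%:R - (x \in S)%:R) * c x / Z)
    = (\sum_u \sum_x (q u x * c x) * ((u \in S)%:R - (x \in S)%:R)) / Z.
  rewrite big_distrl; apply: eq_bigr => u _; rewrite big_distrl.
  by apply: eq_bigr => x _; rewrite /=; ring.
rewrite (@double_sum_sym_diff (fun u x => q u x * c x) (fun y => (y \in S)%:R)).
  by rewrite mul0r.
by move=> u x; rewrite q_balance.
Qed.

Lemma fixation_share : (0 < #|T|)%N -> outward_connected -> fixation =1 share.
Proof.
move=> /card_gt0P[t _] q_out.
have c_sum_gt0 : 0 < \sum_y c y.
  by rewrite (bigD1 t) //= ltr_wpDr // sumr_ge0 // => y _; exact: ltW.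
have set0_nT : finset.set0 != [set: T].
  by apply/eqP => /setP/(_ t); rewrite finset.in_set0 finset.in_setT.
have fixT : fixation [set: T] = share [set: T].
  rewrite fixation_absorbing ?eqxx; last exact: update_setT.
  by rewrite /share (eq_bigl _ _ (@finset.in_setT T)) divff // gt_eqF.
have fix0 : fixation finset.set0 = share finset.set0.
  rewrite fixation_absorbing; last exact: update_set0.
  by rewrite (negbTE set0_nT) /share big_set0 mul0r.
move=> S; apply/eqP; rewrite eq_le; apply/andP; split; rewrite -subr_le0.
- apply: (harmonic_le0 q_out (harmonicB fixation_harmonic share_harmonic));
  by rewrite /= ?fixT ?fix0 subrr.
- apply: (harmonic_le0 q_out (harmonicB share_harmonic fixation_harmonic));
  by rewrite /= ?fixT ?fix0 subrr.
Qed.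

End Kernel.
End NeutralChain.

Section NeutralGraph.
Variables (R : realType) (T : finType) (w : T -> T -> R).
Hypotheses (w_graph : weighted_graph w) (w_conn : graph_connected w).
Hypothesis T_gt1 : (1 < #|T|)%N.

Let N : R := #|T|%:R.

Lemma weight_sym u x : w u x = w x u. Proof. by case: w_graph. Qed.

Lemma weight_ge0 u x : 0 <= w u x. Proof. by case: w_graph. Qed.

Lemma natr_card_gt0 : 0 < N.
Proof. by rewrite ltr0n ltnW. Qed.

Lemma sum_inv_card : \sum_(u : T) N^-1 = 1.
Proof. by rewrite sumr_const -mulr_natl mulfV // gt_eqF ?natr_card_gt0. Qed.

Lemma exists_neighbor u : exists y, 0 < w u y.
Proof.
have /card_gt0P[x] : (0 < #|[set~ u]|)%N by rewrite cardsC1 -ltnS (ltn_predK T_gt1).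
rewrite in_setC1 => xu.
case/connectP: (w_conn u x) => [[|y p] /= path_p last_p].
  by rewrite last_p eqxx in xu.
by case/andP: path_p => uy _; exists y.
Qed.

Lemma deg_gt0 u : 0 < deg w u.
Proof.
have [y uy] := exists_neighbor u.
by rewrite /deg (bigD1 y) //= ltr_wpDr // sumr_ge0 // => x _; exact: weight_ge0.
Qed.

Lemma crossing_edge (S : {set T}) : S != finset.set0 -> S != [set: T] ->
  exists u x, [/\ u \in S, x \notin S & 0 < w u x].
Proof.
move=> /finset.set0Pn[a aS] S_nT.
have [b bS] : exists b, b \notin S.
  apply/existsP; apply: contraR S_nT => /existsPn S_full.
  by apply/eqP/setP => y; rewrite finset.in_setT; move/negPn: (S_full y).
apply/not_existsP => no_cross.
suff S_closed : closed_mem (adj w) (mem S).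
  by move: (closed_connect S_closed (w_conn a b)); rewrite aS (negbTE bS).
move=> y z yz; case: (boolP (y \in S)) => yS; case: (boolP (z \in S)) => zS //.
- by case: (no_cross y); exists z.
- by case: (no_cross z); exists y; rewrite weight_sym.
Qed.

Lemma total_fitness1 (S : {set T}) : total_fitness 1 S = N.
Proof.
by rewrite /total_fitness /fitness; under eq_bigr do rewrite if_same; rewrite sumr_const.
Qed.

Definition kernel_Bd u x := N^-1 * (w u x / deg w u).
Definition kernel_dB u x := N^-1 * (w u x / deg w x).

Lemma trans_Bd_neutral : trans_Bd w 1 = update_kernel kernel_Bd.
Proof.
apply/funext => S; apply/funext => S'; apply: eq_bigr => u _; apply: eq_bigr => x _.
by rewrite total_fitness1 /fitness if_same mul1r.
Qed.

Lemma trans_dB_neutral : trans_dB w 1 = update_kernel kernel_dB.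
Proof.
apply/funext => S; apply/funext => S'.
rewrite /trans_dB /update_kernel exchange_big /=; apply: eq_bigr => u _.
rewrite big_distrr /=; apply: eq_bigr => x _.
under eq_bigr do rewrite /fitness if_same mul1r weight_sym.
by rewrite /fitness if_same mul1r /kernel_dB mulrA weight_sym.
Qed.

Lemma kernel_dB_transpose u x : kernel_dB u x = kernel_Bd x u.
Proof. by rewrite /kernel_dB /kernel_Bd weight_sym. Qed.

Lemma kernel_Bd_ge0 u x : 0 <= kernel_Bd u x.
Proof.
by rewrite mulr_ge0 ?invr_ge0 ?ler0n // divr_ge0 ?weight_ge0 // ltW ?deg_gt0.
Qed.

Lemma kernel_dB_ge0 u x : 0 <= kernel_dB u x.
Proof. by rewrite kernel_dB_transpose kernel_Bd_ge0. Qed.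

Lemma kernel_Bd_sum1 : \sum_u \sum_x kernel_Bd u x = 1.
Proof.
rewrite -sum_inv_card; apply: eq_bigr => u _.
by rewrite -big_distrr -mulr_suml /= divff ?mulr1 // (gt_eqF (deg_gt0 u)).
Qed.

Lemma kernel_dB_sum1 : \sum_u \sum_x kernel_dB u x = 1.
Proof.
rewrite exchange_big /=; under eq_bigr do under eq_bigr do rewrite kernel_dB_transpose.
exact: kernel_Bd_sum1.
Qed.

Lemma outward_connected_of_edges (q : T -> T -> R) :
  (forall u x, 0 < w u x -> 0 < q u x) -> outward_connected q.
Proof.
move=> q_pos S S_n0 S_nT; have [u [x [uS xS ux]]] := crossing_edge S_n0 S_nT.
by exists u, x; split; last exact: q_pos.
Qed.

Lemma rho_Bd_neutral v : rho_Bd w 1 v = (deg w v)^-1 / \sum_y (deg w y)^-1.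
Proof.
rewrite /rho_Bd trans_Bd_neutral -/(fixation kernel_Bd [set v]).
rewrite (fixation_share kernel_Bd_ge0 kernel_Bd_sum1 (c := fun x => (deg w x)^-1)).
- by rewrite /share big_set1.
- by move=> x; rewrite invr_gt0 deg_gt0.
- move=> u x; rewrite /kernel_Bd weight_sym.
  by field; rewrite !gt_eqF ?deg_gt0 ?natr_card_gt0.
- exact: ltnW.
- apply: outward_connected_of_edges => u x ux.
  by rewrite mulr_gt0 ?invr_gt0 ?natr_card_gt0 ?divr_gt0 ?deg_gt0.
Qed.

Lemma rho_dB_neutral v : rho_dB w 1 v = deg w v / \sum_y deg w y.
Proof.
rewrite /rho_dB trans_dB_neutral -/(fixation kernel_dB [set v]).
rewrite (fixation_share kernel_dB_ge0 kernel_dB_sum1 (c := deg w)).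
- by rewrite /share big_set1.
- exact: deg_gt0.
- move=> u x; rewrite /kernel_dB weight_sym.
  by field; rewrite !gt_eqF ?deg_gt0 ?natr_card_gt0.
- exact: ltnW.
- apply: outward_connected_of_edges => u x ux.
  by rewrite mulr_gt0 ?invr_gt0 ?natr_card_gt0 ?divr_gt0 ?deg_gt0.
Qed.

End NeutralGraph.

Section DegreeShares.
Variables (R : realType) (T : finType).

Let N : R := #|T|%:R.

Lemma share_const (f : T -> R) k v :
  (forall y, f y = k) -> k != 0 -> f v / \sum_y f y = N^-1.
Proof.
move=> f_k k_n0; rewrite (eq_bigr (fun=> k)) // sumr_const f_k -mulr_natr.
by rewrite invfM mulrA divff ?mul1r.
Qed.

Lemma sum_mul_sum_inv_gap (d : T -> R) : (forall u, 0 < d u) ->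
  \sum_u \sum_x (d x - d u) ^+ 2 / (d u * d x)
    = 2 * ((\sum_y d y) * (\sum_y (d y)^-1) - N ^+ 2).
Proof.
move=> d_gt0.
have prod1 : (\sum_y d y) * (\sum_y (d y)^-1) = \sum_u \sum_x d x / d u.
  rewrite mulrC big_distrl; apply: eq_bigr => u _.
  by rewrite big_distrr; apply: eq_bigr => x _; rewrite mulrC.
have prod2 : (\sum_y d y) * (\sum_y (d y)^-1) = \sum_u \sum_x d u / d x.
  by rewrite prod1 exchange_big.
have -> : 2 * ((\sum_y d y) * (\sum_y (d y)^-1) - N ^+ 2)
    = \sum_u \sum_x d x / d u + \sum_u \sum_x d u / d x - \sum_(u : T) \sum_(x : T) 2.
  rewrite -prod1 -prod2 !sumr_const -mulrnA -[2 *+ _]mulr_natr natrM /N; ring.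
rewrite -big_split -sumrB; apply: eq_bigr => u _.
rewrite -big_split -sumrB; apply: eq_bigr => x _ /=.
by field; rewrite !gt_eqF.
Qed.

Lemma sum_mul_sum_inv_le_const (d : T -> R) : (forall u, 0 < d u) ->
  (\sum_y d y) * (\sum_y (d y)^-1) <= N ^+ 2 -> forall u x, d u = d x.
Proof.
move=> d_gt0 le_sq.
have gap_ge0 u x : 0 <= (d x - d u) ^+ 2 / (d u * d x).
  by rewrite divr_ge0 ?sqr_ge0 // ltW // mulr_gt0.
have gap0 : \sum_u \sum_x (d x - d u) ^+ 2 / (d u * d x) = 0.
  apply/eqP; rewrite eq_le sumr_ge0 ?andbT => [|u _]; last exact: sumr_ge0.
  by rewrite sum_mul_sum_inv_gap // pmulr_rle0 // subr_le0.
move=> u x.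
have row0 : \sum_x' (d x' - d u) ^+ 2 / (d u * d x') = 0.
  by apply: (psumr_eq0P _ gap0) => // u' _; exact: sumr_ge0.
have /eqP := psumr_eq0P (fun x' _ => gap_ge0 u x') row0 (i := x) isT.
rewrite mulf_eq0 invr_eq0 (gt_eqF (mulr_gt0 (d_gt0 u) (d_gt0 x))) orbF.
by rewrite sqrf_eq0 subr_eq0 => /eqP.
Qed.

Lemma degree_shares_trichotomy (d : T -> R) v : (forall u, 0 < d u) ->
  [\/ (d v)^-1 / \sum_y (d y)^-1 < N^-1, d v / \sum_y d y < N^-1
    | (d v)^-1 / \sum_y (d y)^-1 = N^-1 /\ d v / \sum_y d y = N^-1].
Proof.
move=> d_gt0.
have [|inv_ge] := ltP ((d v)^-1 / \sum_y (d y)^-1) N^-1; first by constructor 1.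
have [|dir_ge] := ltP (d v / \sum_y d y) N^-1; first by constructor 2.
have a_gt0 : 0 < \sum_y (d y)^-1.
  rewrite (bigD1 v) //= ltr_wpDr ?invr_gt0 // sumr_ge0 // => y _.
  by rewrite ltW ?invr_gt0.
have b_gt0 : 0 < \sum_y d y.
  by rewrite (bigD1 v) //= ltr_wpDr // sumr_ge0 // => y _; rewrite ltW.
have N_gt0 : 0 < N by rewrite ltr0n; apply/card_gt0P; exists v.
have prod_ge : N^-1 * N^-1 <= ((\sum_y d y) * (\sum_y (d y)^-1))^-1.
  rewrite [leRHS](_ : _ = ((d v)^-1 / \sum_y (d y)^-1) * (d v / \sum_y d y)).
    by rewrite ler_pM ?invr_ge0 ?(ltW N_gt0).
  by field; rewrite !gt_eqF.
have /(sum_mul_sum_inv_le_const d_gt0) d_const :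
    (\sum_y d y) * (\sum_y (d y)^-1) <= N ^+ 2.
  by rewrite -lef_pV2 ?posrE ?mulr_gt0 ?exprn_gt0 // -exprVn expr2.
constructor 3; split.
- apply: (@share_const (fun y => (d y)^-1) (d v)^-1) => [y|].
    by rewrite (d_const y v).
  by rewrite invr_eq0 gt_eqF.
- by apply: (@share_const d (d v)) => [y|]; rewrite ?(d_const y v) ?gt_eqF.
Qed.

End DegreeShares.

Section CompleteGraph.
Variables (R : realType) (T : finType).

Lemma complete_weighted_graph : weighted_graph (@complete_w R T).
Proof. by split=> [u x|u x|u]; rewrite /complete_w ?eqxx // eq_sym; case: eqP. Qed.

Lemma complete_connected : graph_connected (@complete_w R T).
Proof.
move=> u x; have [-> // | ux] := eqVneq u x.
by apply: connect1; rewrite /adj /complete_w (negbTE ux) ltr01.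
Qed.

Lemma deg_complete u : deg (@complete_w R T) u = #|T|.-1%:R.
Proof.
rewrite /deg (bigD1 u) //= /complete_w eqxx add0r -(cardsC1 u) -sumr_const.
by apply: eq_big => [x|x /negbTE ux]; rewrite ?in_setC1 // eq_sym ux.
Qed.

Hypothesis T_gt1 : (1 < #|T|)%N.

Lemma card_pred_neq0 : #|T|.-1%:R != 0 :> R.
Proof. by rewrite pnatr_eq0 -lt0n -ltnS (ltn_predK T_gt1). Qed.

Lemma rho_Bd_complete v : rho_Bd (@complete_w R T) 1 v = #|T|%:R^-1.
Proof.
rewrite (rho_Bd_neutral complete_weighted_graph complete_connected T_gt1).
apply: (@share_const _ _ (fun y => (deg (@complete_w R T) y)^-1) (#|T|.-1%:R)^-1).
  by move=> y; rewrite deg_complete.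
by rewrite invr_eq0 card_pred_neq0.
Qed.

Lemma rho_dB_complete v : rho_dB (@complete_w R T) 1 v = #|T|%:R^-1.
Proof.
rewrite (rho_dB_neutral complete_weighted_graph complete_connected T_gt1).
apply: (@share_const _ _ (deg (@complete_w R T)) #|T|.-1%:R) => [y|].
  exact: deg_complete.
exact: card_pred_neq0.
Qed.

End CompleteGraph.

Theorem theorem1 (R : realType) (T : finType) (w : T -> T -> R)
  (hw : weighted_graph w) (hconn : graph_connected w) (v : T) :
  rho_Bd w 1 v < rho_Bd (@complete_w R T) 1 v
  \/ rho_dB w 1 v < rho_dB (@complete_w R T) 1 v
  \/ (rho_Bd w 1 v = rho_Bd (@complete_w R T) 1 v
      /\ rho_dB w 1 v = rho_dB (@complete_w R T) 1 v).
Proof.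
have [/fintype_le1P T_le1 | T_gt1] := leqP #|T| 1.
  have -> : w = @complete_w R T.
    apply/funext => u; apply/funext => x.
    by rewrite (T_le1 u x) /complete_w eqxx; case: hw.
  by right; right.
rewrite rho_Bd_complete // rho_dB_complete // rho_Bd_neutral // rho_dB_neutral //.
by case: (degree_shares_trichotomy v (deg_gt0 hw hconn T_gt1)) => ?;
  [left | right; left | right; right].
Qed.
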